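(* Assume $\operatorname{char}\widetilde K\neq2,3$. Let $A,B,C,D\in\mathbb{Z}[\alpha_1,\dots,\alpha_6]$ be the polynomials defined below (with $u=1$). Let $\omega=(\omega_1,\dots,\omega_6)\in\mathbb{R}^6$ satisfy $\omega_1<\omega_2<\omega_3<\omega_4<\omega_5<\omega_6$ (a weight vector in the relative interior of a Type (I) cell). Then $$\operatorname{in}_\omega(A)=6\alpha_4^2\alpha_5^2\alpha_6^2,\quad \operatorname{in}_\omega(B)=4\alpha_3^2\alpha_4^2\alpha_5^4\alpha_6^4,\quad \operatorname{in}_\omega(C)=8\alpha_3^2\alpha_4^4\alpha_5^6\alpha_6^6,\quad \operatorname{in}_\omega(D)=\alpha_2^2\alpha_3^4\alpha_4^6\alpha_5^8\alpha_6^{10}.$$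
   Context: Here $\widetilde K$ is the residue field of the underlying non-Archimedean field. Set $\Delta_{ij}=(\alpha_i-\alpha_j)^2$. $A=\sum\Delta_{ij}\Delta_{kl}\Delta_{mn}$ over the 15 partitions $\{\{i,j\},\{k,l\},\{m,n\}\}$ of $\{1,\dots,6\}$ into pairs; $B=\sum(\Delta_{ij}\Delta_{jk}\Delta_{ki})(\Delta_{lm}\Delta_{mn}\Delta_{nl})$ over the 10 partitions $\{\{i,j,k\},\{l,m,n\}\}$ into two triples; $C=\sum(\Delta_{ij}\Delta_{jk}\Delta_{ki})(\Delta_{lm}\Delta_{mn}\Delta_{nl})(\Delta_{il}\Delta_{jm}\Delta_{kn})$ over the 60 choices of a partition into two triples $\{i,j,k\},\{l,m,n\}$ together with a bijective pairing $\{\{i,l\},\{j,m\},\{k,n\}\}$ between them; $D=\prod_{i<j}\Delta_{ij}$. For a polynomial $P$ and $\omega\in\mathbb{R}^6$, $\operatorname{in}_\omega(P)$ is the sum of the terms $c\,\alpha^m$ of $P$ for which $\langle\omega,m\rangle$ is maximal. *)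

From HB Require Import structures.
From mathcomp Require Import all_boot all_order all_algebra.
From mathcomp Require Import mpoly.
Set Implicit Arguments. Unset Strict Implicit. Unset Printing Implicit Defensive.
Import Order.TTheory GRing.Theory Num.Theory.
Local Open Scope ring_scope.

(* Polynomials in Z[alpha_1,...,alpha_6]; alpha_k is 'X_(k-1), k = 1..6. *)
Notation P6 := {mpoly int[6]}.

Definition alpha (i : 'I_6) : P6 := 'X_i.

Definition Delta (i j : 'I_6) : P6 := (alpha i - alpha j) ^+ 2.

Definition pairprod (S : {set 'I_6}) : P6 :=
  \prod_(i in S) \prod_(j in S | (i < j)%N) Delta i j.

Definition blockpart (k : nat) (P : {set {set 'I_6}}) : bool :=
  partition P [set: 'I_6] && [forall S in P, #|S| == k].

Definition Apoly : P6 :=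
  \sum_(P : {set {set 'I_6}} | blockpart 2 P) \prod_(S in P) pairprod S.

Definition Bpoly : P6 :=
  \sum_(P : {set {set 'I_6}} | blockpart 3 P) \prod_(S in P) pairprod S.

(* a partition P into two triples together with a bijective pairing M between
   the two triples, i.e. a partition M into pairs each meeting each triple
   in exactly one point *)
Definition Cpoly : P6 :=
  \sum_(P : {set {set 'I_6}} | blockpart 3 P)
   \sum_(M : {set {set 'I_6}} | blockpart 2 M &&
          [forall S in M, forall T in P, #|S :&: T| == 1%N])
     ((\prod_(T in P) pairprod T) * \prod_(S in M) pairprod S).

Definition Dpoly : P6 := \prod_(i : 'I_6) \prod_(j : 'I_6 | (i < j)%N) Delta i j.

Definition wdeg (R : numDomainType) (w : 'I_6 -> R) (m : 'X_{1..6}) : R :=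
  \sum_(i < 6) w i * (m i)%:R.

Definition init_form (R : numDomainType) (w : 'I_6 -> R) (p : P6) : P6 :=
  \sum_(m <- msupp p | all (fun m' => wdeg w m' <= wdeg w m) (msupp p))
    p@_m *: 'X_[m].

Definition al (k : nat) : P6 := 'X_(@inord 5 k.-1).

(* For an increasing weight w, the leading term of Delta_ij (i < j) is alpha_j^2,
   and leading terms multiply.  D, and every summand of A, B and C, is a product
   of Deltas determined by set partitions of {1..6}, so its leading term is an
   explicit monomial with coefficient 1.  Encoding a set partition by the
   labelling that sends each point to the least element of its block turns the
   three sums into finite sums over lists.  Among the leading exponent vectors of
   the summands one dominates all the others in the suffix-sum order, which
   forces a strictly larger weight for every increasing w; the initial form is
   that monomial times the number of summands attaining it. *)

From HB Require Import structures.
From mathcomp Require Import all_boot all_order all_algebra.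
From mathcomp Require Import mpoly.
From mathcomp Require Import lra.
Set Implicit Arguments. Unset Strict Implicit. Unset Printing Implicit Defensive.
Import Order.TTheory GRing.Theory Num.Theory.
Local Open Scope ring_scope.

Section LeadingTerm.
Variables (R : realDomainType) (w : 'I_6 -> R).

Lemma wdegD m1 m2 : wdeg w (m1 + m2)%MM = wdeg w m1 + wdeg w m2.
Proof.
rewrite /wdeg -big_split /=; apply: eq_bigr => i _.
by rewrite mnmDE natrD mulrDr.
Qed.

Lemma wdeg_mulmn (i : 'I_6) k : wdeg w (U_(i) *+ k)%MM = w i * k%:R.
Proof.
rewrite /wdeg (bigD1 i) //= big1 ?addr0 => [|j /negbTE ji].
  by rewrite mulmnE mnm1E eqxx mul1n.
by rewrite mulmnE mnm1E eq_sym ji mul0n mulr0.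
Qed.

Lemma wdeg1 (i : 'I_6) : wdeg w U_(i)%MM = w i.
Proof. by rewrite -[U_(i)%MM]mulm1n wdeg_mulmn mulr1. Qed.

Definition below (W : R) (p : P6) := forall m, m \in msupp p -> wdeg w m < W.

Lemma below0 W : below W 0.
Proof. by move=> m; rewrite msupp0. Qed.

Lemma below_le W1 W2 p : W1 <= W2 -> below W1 p -> below W2 p.
Proof. by move=> le h m /h /lt_le_trans; apply. Qed.

Lemma belowD W p q : below W p -> below W q -> below W (p + q).
Proof. by move=> hp hq m /msuppD_le; rewrite mem_cat => /orP[/hp|/hq]. Qed.

Lemma belowN W p : below W p -> below W (- p).
Proof. by move=> hp m; rewrite (perm_mem (msuppN _)) => /hp. Qed.

Lemma belowZ W (c : int) p : below W p -> below W (c *: p).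
Proof. by move=> hp m /msuppZ_le /hp. Qed.

Lemma belowX W m : wdeg w m < W -> below W 'X_[m].
Proof. by move=> h m'; rewrite msuppX inE => /eqP ->. Qed.

Lemma below_mul W1 W2 p q :
  {in msupp p, forall m, wdeg w m <= W1} -> below W2 q -> below (W1 + W2) (p * q).
Proof.
move=> hp hq m /msuppM_le /allpairsP [[m1 m2] /= [/hp h1 /hq h2 ->]].
by rewrite wdegD ler_ltD.
Qed.

Lemma below_mulX W c m p : below W p -> below (wdeg w m + W) (c *: 'X_[m] * p).
Proof.
apply: below_mul => m' /msuppZ_le; rewrite msuppX inE => /eqP ->.
exact: lexx.
Qed.

Definition lead_term (p : P6) (c : int) m :=
  exists2 r, p = c *: 'X_[m] + r & below (wdeg w m) r.

Lemma lead_term1 : lead_term 1 1 0%MM.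
Proof. by exists 0; [rewrite scale1r mpolyX0 addr0 | apply: below0]. Qed.

Lemma lead_termM p q c1 c2 m1 m2 :
  lead_term p c1 m1 -> lead_term q c2 m2 -> lead_term (p * q) (c1 * c2) (m1 + m2)%MM.
Proof.
move=> [r1 -> h1] [r2 -> h2].
exists (c1 *: 'X_[m1] * r2 + c2 *: 'X_[m2] * r1 + r1 * r2).
  rewrite mulrDl !mulrDr -scalerAl -scalerAr scalerA mpolyXD !addrA.
  by rewrite [r1 * (_ *: _)]mulrC.
rewrite wdegD; apply: belowD; first apply: belowD.
- exact: below_mulX.
- by rewrite addrC; apply: below_mulX.
- by apply: below_mul h2 => m /h1 /ltW.
Qed.

Lemma lead_term_prod (I : Type) (r : seq I) (P : pred I) (F : I -> P6) M :
  (forall i, P i -> lead_term (F i) 1 (M i)) ->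
  lead_term (\prod_(i <- r | P i) F i) 1 (\big[+%MM/0%MM]_(i <- r | P i) M i).
Proof.
move=> h; elim: r => [|x r IH]; first by rewrite !big_nil; apply: lead_term1.
rewrite !big_cons; case: ifP => // Px.
by have := lead_termM (h x Px) IH; rewrite mulr1.
Qed.

Lemma lead_term_below p c m W : lead_term p c m -> wdeg w m < W -> below W p.
Proof.
move=> [r -> h] lt; apply: belowD; first by apply: belowZ; apply: belowX.
exact: below_le (ltW lt) h.
Qed.

Lemma lead_term_sum (I : eqType) (s : seq I) (F : I -> P6) M m :
  (forall i, i \in s -> lead_term (F i) 1 (M i)) ->
  (forall i, i \in s -> M i != m -> wdeg w (M i) < wdeg w m) ->
  lead_term (\sum_(i <- s) F i) (count (fun i => M i == m) s)%:Z m.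
Proof.
elim: s => [|x s IH] hF hM.
  by rewrite big_nil; exists 0; [rewrite scale0r addr0 | apply: below0].
have sub i : i \in s -> i \in x :: s by rewrite inE orbC => ->.
have [r2 sE h2] := IH (fun i hi => hF i (sub i hi)) (fun i hi => hM i (sub i hi)).
have [r1 Fx h1] := hF x (mem_head _ _).
rewrite big_cons sE /=; case: eqVneq => [Mx | ne].
  exists (r1 + r2); last by rewrite -Mx in h2 *; apply: belowD.
  by rewrite Fx Mx addrACA -scalerDl PoszD.
exists (F x + r2); first by rewrite add0n addrCA.
apply: belowD h2; apply: lead_term_below (hF x (mem_head _ _)) (hM x (mem_head _ _) ne).
Qed.

Lemma init_form_lead_term p c m :
  c != 0 -> lead_term p c m -> init_form w p = c *: 'X_[m].
Proof.
move=> c0 [r pE hr].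
have rm : r@_m = 0 by apply: memN_msupp_eq0; apply/negP => /hr; rewrite ltxx.
have pm : p@_m = c by rewrite pE mcoeffD mcoeffZ mcoeffX eqxx rm addr0 mulr1.
have mp : m \in msupp p by rewrite mcoeff_msupp pm.
have lower m' : m' \in msupp p -> m' != m -> wdeg w m' < wdeg w m.
  move=> /[swap] ne; rewrite pE => /msuppD_le; rewrite mem_cat => /orP[|/hr //].
  by move/msuppZ_le; rewrite msuppX inE (negbTE ne).
rewrite /init_form big_seq_cond (eq_bigl (fun m' => m' == m)) => [|m'].
  by rewrite -big_filter filter_pred1_uniq ?msupp_uniq // big_seq1 pm.
have [-> | ne] := eqVneq m' m.
  by rewrite mp; apply/allP => m'' h; have [->|/(lower _ h)/ltW] := eqVneq m'' m.
apply/negP => /andP[h /allP /(_ _ mp)]; by rewrite leNgt lower.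
Qed.

End LeadingTerm.

Definition mnm_of_seq (s : seq nat) : 'X_{1..6} := [multinom nth 0%N s i | i < 6].

Definition add_exps (s t : seq nat) : seq nat :=
  mkseq (fun k => nth 0 s k + nth 0 t k)%N 6.

Lemma mnm_of_seqD s t :
  (mnm_of_seq s + mnm_of_seq t)%MM = mnm_of_seq (add_exps s t).
Proof. by apply/mnmP => i; rewrite mnmDE !mnmE nth_mkseq. Qed.

Definition Delta_prod (r : nat -> nat -> bool) : P6 :=
  \prod_(i < 6) \prod_(j < 6 | r i j && (i < j)%N) Delta i j.

Definition Delta_prod_exp (r : nat -> nat -> bool) : seq nat :=
  mkseq (fun j => 2 * count (fun i => r i j && (i < j)) (iota 0 6))%N 6.

Lemma mnm_of_Delta_prod_exp (r : nat -> nat -> bool) :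
  mnm_of_seq (Delta_prod_exp r) =
  (\big[+%MM/0%MM]_(i < 6)
     \big[+%MM/0%MM]_(j < 6 | r i j && (i < j)%N) (U_(j) *+ 2))%MM.
Proof.
apply/mnmP => k; rewrite mnm_sumE mnmE nth_mkseq //.
rewrite (eq_bigr (fun i : 'I_6 => (r i k && (i < k)) * 2)%N) => [|i _]; last first.
  rewrite mnm_sumE big_mkcond /= (bigD1 k) //= big1 ?addn0 => [|j /negbTE jk].
    by rewrite mulmnE mnm1E eqxx mul1n; case: (_ && _).
  by case: (_ && _); rewrite // mulmnE mnm1E jk.
rewrite -big_distrl mulnC -sumn_count sumnE big_map.
by rewrite -(big_mkord xpredT (fun i => (r i k && (i < k)%N) : nat)).
Qed.

Definition dominated (s t : seq nat) : bool :=
  [&& size s == 6, size t == 6, sumn s == sumn t,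
      all (fun k => sumn (drop k s) <= sumn (drop k t))%N (iota 1 5) &
      has (fun k => sumn (drop k s) < sumn (drop k t))%N (iota 1 5)].

Definition dominant (m : seq nat) (n : nat) (ls : seq (seq nat)) : bool :=
  all (fun l => (l == m) || dominated l m) ls && (count (pred1 m) ls == n).

Section IncreasingWeight.
Variables (R : realDomainType) (w : 'I_6 -> R).
Hypothesis w_incr : forall i j : 'I_6, (i < j)%N -> w i < w j.

Lemma lead_term_Delta (i j : 'I_6) :
  (i < j)%N -> lead_term w (Delta i j) 1 (U_(j) *+ 2)%MM.
Proof.
move=> ij; exists ('X_[U_(i) *+ 2] - 2%:R *: 'X_[U_(i) + U_(j)]).
  rewrite /Delta /alpha sqrrB !mpolyXn mpolyXD scaler_nat scale1r.
  by rewrite addrC addrA.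
apply: belowD; last apply/belowN/belowZ; apply: belowX.
  by rewrite !wdeg_mulmn ltr_pM2r ?ltr0n ?w_incr.
by rewrite wdegD !wdeg1 wdeg_mulmn mulr_natr mulr2n ltrD2r w_incr.
Qed.

Lemma lead_term_Delta_prod r :
  lead_term w (Delta_prod r) 1 (mnm_of_seq (Delta_prod_exp r)).
Proof.
rewrite mnm_of_Delta_prod_exp; apply: lead_term_prod => i _.
by apply: lead_term_prod => j /andP[_]; apply: lead_term_Delta.
Qed.

Lemma lead_term_Delta_prodM r r' :
  lead_term w (Delta_prod r * Delta_prod r') 1
    (mnm_of_seq (add_exps (Delta_prod_exp r) (Delta_prod_exp r'))).
Proof.
rewrite -mnm_of_seqD -[1]/(1 * 1 : int).
by apply: lead_termM; apply: lead_term_Delta_prod.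
Qed.

Lemma wdeg_dominated s t :
  dominated s t -> wdeg w (mnm_of_seq s) < wdeg w (mnm_of_seq t).
Proof.
case: s => [|a0 [|a1 [|a2 [|a3 [|a4 [|a5 [|? ?]]]]]]] //.
case: t => [|b0 [|b1 [|b2 [|b3 [|b4 [|b5 [|? ?]]]]]]] //.
rewrite /dominated /= !addn0 -!(ltr_nat R) -!(eqr_nat R) -!(ler_nat R) !natrD.
case/and3P => /eqP sum_eq /and5P[suf1 suf2 suf3 suf4 /andP[suf5 _]] strict.
have w_lt i : (i < 5)%N -> w (inord i) < w (inord i.+1).
  by move=> i5; apply: w_incr; rewrite !inordK // ltnW.
have w01 := w_lt 0%N isT; have w12 := w_lt 1%N isT; have w23 := w_lt 2%N isT.
have w34 := w_lt 3%N isT; have w45 := w_lt 4%N isT.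
have wdegE u : wdeg w (mnm_of_seq u) = \sum_(k < 6) w (inord k) * (nth 0 u k)%:R.
  by apply: eq_bigr => k _; rewrite mnmE inord_val.
rewrite !wdegE !big_ord_recr !big_ord0 /= !add0r.
(* Abel summation: as the totals agree, wdeg t - wdeg s is the sum over k of
   (w_k - w_(k-1)) times the k-th suffix sum of t - s. *)
case/orP: strict => [|/orP[|/orP[|/orP[|/orP[|//]]]]] strict; nra.
Qed.

Lemma init_form_sum_dominant (I : eqType) (s : seq I) F L m n :
  (forall i, lead_term w (F i) 1 (mnm_of_seq (L i))) ->
  dominant m n.+1 (map L s) ->
  init_form w (\sum_(i <- s) F i) = n.+1%:R * 'X_[mnm_of_seq m].
Proof.
move=> lead_F /andP[/allP L_dom /eqP count_m].
have L_lt i : i \in s -> L i != m -> wdeg w (mnm_of_seq (L i)) < wdeg w (mnm_of_seq m).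
  move=> si /negbTE Lm; have := L_dom (L i) (map_f L si).
  by rewrite Lm => /wdeg_dominated.
have count_mnm : count (fun i => mnm_of_seq (L i) == mnm_of_seq m) s = n.+1.
  rewrite -count_m count_map; apply: eq_in_count => i si /=.
  have [-> | Lm] := eqVneq (L i) m; first by rewrite eqxx.
  by apply/negbTE/eqP => eq_m; have := L_lt i si Lm; rewrite eq_m ltxx.
rewrite mulr_natl -scaler_nat natz -count_mnm.
apply: init_form_lead_term; first by rewrite count_mnm.
apply: lead_term_sum => [i _ | i si]; first exact: lead_F.
by move=> ne; apply: L_lt => //; apply: contraNneq ne => ->.
Qed.

End IncreasingWeight.

Section Labellings.
Local Open Scope nat_scope.

Fixpoint bounded_seqs (n : nat) : seq (seq nat) :=
  if n is n'.+1 then [seq rcons s a | s <- bounded_seqs n', a <- iota 0 n]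
  else [:: [::]].

Lemma mem_bounded_seqs n s :
  (s \in bounded_seqs n) = (size s == n) && all (fun i => nth 0 s i <= i) (iota 0 n).
Proof.
elim: n s => [|n IHn] s; first by case: s.
case/lastP: s => [|s a].
  rewrite [RHS]/=; apply/negbTE/allpairsP => -[[s a] [_ _ /(congr1 size)]].
  by rewrite size_rcons.
rewrite size_rcons eqSS -[X in iota 0 X]addn1 iotaD all_cat add0n.
rewrite [all _ (iota n 1)]/= andbT.
have nth_rcons_lt t b i : i < size t -> nth 0 (rcons t b) i = nth 0 t i.
  by move=> lt; rewrite nth_rcons lt.
apply/allpairsP/and3P => [[[s' a'] /= [s'n a'n /rcons_inj[-> ->]]] | ].
  move: s'n a'n; rewrite -[0 :: _]/(iota 0 n.+1) IHn mem_iota ltnS.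
  move=> /andP[/eqP sn /allP sle] a'n.
  rewrite nth_rcons sn ltnn eqxx; split=> //.
  by apply/allP => i iI; rewrite nth_rcons_lt ?sle // sn; move: iI; rewrite mem_iota.
move=> [/eqP sn /allP sle]; rewrite nth_rcons sn ltnn eqxx => an.
exists (s, a); split=> //; last by rewrite mem_iota ltnS.
rewrite -/(bounded_seqs n) IHn sn eqxx; apply/allP => i iI.
by rewrite /= -(nth_rcons_lt _ a) ?sle // sn; move: iI; rewrite mem_iota.
Qed.

Lemma uniq_bounded_seqs n : uniq (bounded_seqs n).
Proof.
elim: n => // n IHn; apply: allpairs_uniq (iota_uniq 0 n.+1) _ => //.
by move=> [s a] [s' a'] _ _ /rcons_inj.
Qed.

Definition same_label (c : seq nat) (i j : nat) : bool := nth 0 c i == nth 0 c j.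

(* [c] sends each point to the least element of its block, and all blocks
   have [k] elements. *)
Definition canonical_labelling (k : nat) (c : seq nat) : bool :=
  [&& size c == 6, all (fun i => nth 0 c i <= i) (iota 0 6),
      all (fun i => nth 0 c (nth 0 c i) == nth 0 c i) (iota 0 6) &
      all (fun i => count (same_label c i) (iota 0 6) == k) (iota 0 6)].

Definition canonical_labellings (k : nat) : seq (seq nat) :=
  filter (canonical_labelling k) (bounded_seqs 6).

Lemma mem_canonical_labellings k c :
  (c \in canonical_labellings k) = canonical_labelling k c.
Proof.
rewrite mem_filter andb_idr // => /and4P[/eqP sc le _ _].
by rewrite mem_bounded_seqs sc eqxx.
Qed.

Lemma uniq_canonical_labellings k : uniq (canonical_labellings k).
Proof. exact/filter_uniq/uniq_bounded_seqs. Qed.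

Definition label_partition (c : seq nat) : {set {set 'I_6}} :=
  equivalence_partition (fun i j : 'I_6 => same_label c i j) [set: 'I_6].

Lemma same_label_equiv c :
  {in [set: 'I_6] & &, equivalence_rel (fun i j : 'I_6 => same_label c i j)}.
Proof. by move=> x y z _ _ _; rewrite /same_label eqxx; split=> // /eqP ->. Qed.

Lemma label_partitionP c : partition (label_partition c) [set: 'I_6].
Proof. exact: equivalence_partitionP (same_label_equiv c). Qed.

Lemma mem_pblock_label_partition c (i j : 'I_6) :
  (j \in pblock (label_partition c) i) = same_label c i j.
Proof. by rewrite (pblock_equivalence_partition (same_label_equiv c)). Qed.

Lemma card_ord6 (A : {set 'I_6}) :
  #|A| = count (fun j => (inord j : 'I_6) \in A) (iota 0 6).
Proof.
rewrite -sum1_card big_mkcond -sumn_count sumnE big_map.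
rewrite -[iota 0 6]/(index_iota 0 6) big_mkord.
by apply: eq_bigr => i _; rewrite inord_val; case: (i \in A).
Qed.

Lemma card_label_class k c (x : 'I_6) : canonical_labelling k c ->
  #|[set y in [set: 'I_6] | same_label c x y]| = k.
Proof.
case/and4P => _ _ _ /allP /(_ x); rewrite mem_iota ltn_ord => /(_ isT) /eqP <-.
rewrite card_ord6; apply: eq_in_count => j; rewrite mem_iota => /andP[_ j6].
by rewrite !inE /same_label inordK.
Qed.

Lemma blockpart_label_partition k c :
  canonical_labelling k c -> blockpart k (label_partition c).
Proof.
move=> ck; rewrite /blockpart label_partitionP /=.
by apply/forall_inP => _ /imsetP[x _ ->]; rewrite (card_label_class x ck).
Qed.

Lemma find_iota_eq (a : pred nat) n l :
  l < n -> a l -> (forall j, j < l -> ~~ a j) -> find a (iota 0 n) = l.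
Proof.
move=> ln al before; apply/eqP; rewrite eqn_leq; apply/andP; split.
  by rewrite leqNgt; apply/negP => /(before_find 0); rewrite nth_iota // al.
rewrite leqNgt; apply/negP => lt_find; have := before _ lt_find.
have has_a : has a (iota 0 n) by apply/hasP; exists l; rewrite ?mem_iota.
by have := nth_find 0 has_a; rewrite nth_iota ?(ltn_trans lt_find) // => ->.
Qed.

Definition label_of_partition (P : {set {set 'I_6}}) : seq nat :=
  mkseq (fun i => find (fun j => (inord j : 'I_6) \in pblock P (inord i)) (iota 0 6)) 6.

Lemma label_partitionK k c :
  canonical_labelling k c -> label_of_partition (label_partition c) = c.
Proof.
case/and4P => /eqP sc /allP c_le /allP c_idem _.
apply: (@eq_from_nth _ 0); first by rewrite size_mkseq sc.
move=> i; rewrite size_mkseq => i6; rewrite nth_mkseq //.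
have iI : i \in iota 0 6 by rewrite mem_iota.
have l6 : nth 0 c i < 6 by apply: leq_ltn_trans (c_le i iI) i6.
apply: find_iota_eq => // [|j jl]; rewrite mem_pblock_label_partition /same_label.
  by rewrite !inordK // (eqP (c_idem i iI)).
rewrite !inordK ?(ltn_trans jl) //; apply/eqP => cij.
have jI : j \in iota 0 6 by rewrite mem_iota (ltn_trans jl).
by have := c_le j jI; rewrite -cij leqNgt jl.
Qed.

Section LabelOfPartition.
Variable P : {set {set 'I_6}}.
Hypothesis partP : partition P [set: 'I_6].

Let B (i : nat) := pblock P (inord i).
Let f (i : nat) := find (fun j => (inord j : 'I_6) \in B i) (iota 0 6).

Let coverP : cover P = [set: 'I_6].
Proof. by case/and3P: partP => /eqP. Qed.

Let trivP : trivIset P.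
Proof. by case/and3P: partP. Qed.

Let mem_B i : (inord i : 'I_6) \in B i.
Proof. by rewrite mem_pblock coverP in_setT. Qed.

Let f_spec i : i < 6 -> [/\ f i <= i, f i < 6 & (inord (f i) : 'I_6) \in B i].
Proof.
move=> i6; have has_B : has (fun j => (inord j : 'I_6) \in B i) (iota 0 6).
  by apply/hasP; exists i; rewrite ?mem_iota.
have f6 : f i < 6 by rewrite -[6]/(size (iota 0 6)) -has_find.
split=> //; last by have := nth_find 0 has_B; rewrite nth_iota.
by rewrite leqNgt; apply/negP => /(before_find 0); rewrite nth_iota // mem_B.
Qed.

Let B_eq i j : j < 6 -> (B i == B j) = ((inord j : 'I_6) \in B i).
Proof. by move=> j6; rewrite eq_pblock ?coverP ?in_setT. Qed.

Let same_label_of_partition i j : i < 6 -> j < 6 ->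
  same_label (label_of_partition P) i j = (B i == B j).
Proof.
move=> i6 j6; rewrite /same_label !nth_mkseq //.
apply/eqP/eqP => [fij | Bij]; last by rewrite /B in Bij; rewrite Bij.
change (f i = f j) in fij.
have [_ fi6 Bfi] := f_spec i6; have [_ fj6 Bfj] := f_spec j6.
have := B_eq i fi6; rewrite Bfi => /eqP ->.
by have := B_eq j fj6; rewrite Bfj fij => /eqP ->.
Qed.

Lemma label_of_partitionK : label_partition (label_of_partition P) = P.
Proof.
rewrite -{2}(equivalence_partition_pblock partP); apply: eq_imset => x.
apply/setP => y; rewrite !inE same_label_of_partition // B_eq //.
by rewrite /B !inord_val.
Qed.

Lemma canonical_label_of_partition k :
  blockpart k P -> canonical_labelling k (label_of_partition P).
Proof.
case/andP=> _ /forall_inP card_P; apply/and4P; split.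
- by rewrite size_mkseq.
- apply/allP => i; rewrite mem_iota => /andP[_ i6].
  by rewrite nth_mkseq //; case: (f_spec i6).
- apply/allP => i; rewrite mem_iota => /andP[_ i6]; have [_ fi6 Bfi] := f_spec i6.
  have ci : nth 0 (label_of_partition P) i = f i by rewrite nth_mkseq.
  have := same_label_of_partition i6 fi6; rewrite B_eq // Bfi => /eqP ci_fi.
  by rewrite {1}ci -ci_fi.
apply/allP => i; rewrite mem_iota => /andP[_ i6].
rewrite -(eqP (card_P (B i) _)) ?card_ord6; last by rewrite pblock_mem ?coverP.
apply/eqP/eq_in_count => j; rewrite mem_iota => /andP[_ j6].
by rewrite same_label_of_partition // B_eq.
Qed.

End LabelOfPartition.

Lemma label_partition_inj k :
  {in canonical_labellings k &, injective label_partition}.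
Proof.
apply: (can_in_inj (g := label_of_partition)) => c.
by rewrite mem_canonical_labellings => /label_partitionK.
Qed.

End Labellings.

Lemma blockpart_labellings k :
  blockpart k =i map label_partition (canonical_labellings k).
Proof.
move=> P; apply/idP/mapP => [kP | [c ck ->]].
  have partP : partition P [set: 'I_6] by case/andP: kP.
  exists (label_of_partition P); last by rewrite label_of_partitionK.
  by rewrite mem_canonical_labellings canonical_label_of_partition.
by apply: blockpart_label_partition; rewrite -mem_canonical_labellings.
Qed.

Lemma big_blockpart (T : Type) (idx : T) (op : Monoid.com_law idx) k F :
  \big[op/idx]_(P | blockpart k P) F P =
  \big[op/idx]_(c <- canonical_labellings k) F (label_partition c).
Proof.
rewrite -(big_map label_partition xpredT) big_uniq.
  by apply: eq_bigl => P; rewrite -blockpart_labellings.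
rewrite map_inj_in_uniq ?uniq_canonical_labellings //.
exact: label_partition_inj.
Qed.

Lemma prod_pairprod_partition P : partition P [set: 'I_6] ->
  \prod_(S in P) pairprod S =
  \prod_(i < 6) \prod_(j < 6 | (j \in pblock P i) && (i < j)%N) Delta i j.
Proof.
case/and3P => /eqP coverP trivP _.
pose H i := \prod_(j < 6 | (j \in pblock P i) && (i < j)%N) Delta i j.
transitivity (\prod_(S in P) \prod_(i in S) H i).
  apply: eq_bigr => S SP; apply: eq_bigr => i iS.
  by rewrite /H (def_pblock trivP SP iS).
rewrite -(big_trivIset (E := H) P trivP) coverP.
by apply: eq_bigl => i; rewrite in_setT.
Qed.

Lemma prod_pairprod_label_partition c :
  \prod_(S in label_partition c) pairprod S = Delta_prod (same_label c).
Proof.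
rewrite prod_pairprod_partition ?label_partitionP //; apply: eq_bigr => i _.
by apply: eq_bigl => j; rewrite mem_pblock_label_partition.
Qed.

Lemma sum_blockpart_pairprod k :
  \sum_(P | blockpart k P) \prod_(S in P) pairprod S =
  \sum_(c <- canonical_labellings k) Delta_prod (same_label c).
Proof.
by rewrite big_blockpart; apply: eq_bigr => c _; rewrite prod_pairprod_label_partition.
Qed.

Definition meets_once (c d : seq nat) : bool :=
  all (fun x => all (fun y =>
    count (fun z => same_label d x z && same_label c y z) (iota 0 6) == 1%N)
      (iota 0 6)) (iota 0 6).

Lemma forall_ordS_iota n (q : pred 'I_n.+1) :
  [forall x, q x] = all (fun k => q (inord k)) (iota 0 n.+1).
Proof.
apply/forallP/allP => [qx k _ | qk x]; first exact: qx.
by have := qk x; rewrite inord_val mem_iota ltn_ord; apply.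
Qed.

Lemma forall_label_partition c (Q : pred {set 'I_6}) :
  [forall S in label_partition c, Q S] =
  [forall x : 'I_6, Q [set y in [set: 'I_6] | same_label c x y]].
Proof.
apply/forall_inP/forallP => [QS x | Qx _ /imsetP[x _ ->]]; last exact: Qx.
by apply: QS; rewrite imset_f ?in_setT.
Qed.

Lemma meets_onceE c d :
  [forall S in label_partition d, forall T in label_partition c, #|S :&: T| == 1%N] =
  meets_once c d.
Proof.
rewrite forall_label_partition forall_ordS_iota; apply: eq_in_all => x.
rewrite mem_iota => /andP[_ x6].
rewrite forall_label_partition forall_ordS_iota; apply: eq_in_all => y.
rewrite mem_iota => /andP[_ y6].
rewrite card_ord6; congr (_ == _); apply: eq_in_count => z.
by rewrite mem_iota => /andP[_ z6]; rewrite !inE /same_label !inordK.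
Qed.

Definition triple_matching_labellings : seq (seq nat * seq nat) :=
  [seq (c, d) | c <- canonical_labellings 3,
                d <- filter (meets_once c) (canonical_labellings 2)].

Lemma Cpoly_labellings :
  Cpoly = \sum_(cd <- triple_matching_labellings)
            Delta_prod (same_label cd.1) * Delta_prod (same_label cd.2).
Proof.
rewrite big_allpairs_dep /Cpoly big_blockpart; apply: eq_bigr => c _.
rewrite big_mkcondr big_blockpart [RHS]big_filter [RHS]big_mkcond.
apply: eq_bigr => d _.
by rewrite meets_onceE !prod_pairprod_label_partition.
Qed.

Lemma mpolyX_al (a1 a2 a3 a4 a5 a6 : nat) :
  'X_[mnm_of_seq [:: a1; a2; a3; a4; a5; a6]] =
  al 1 ^+ a1 * al 2 ^+ a2 * al 3 ^+ a3 * al 4 ^+ a4 * al 5 ^+ a5 * al 6 ^+ a6.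
Proof.
rewrite /al !mpolyXn -!mpolyXD; congr 'X_[_]; apply/mnmP => i.
rewrite mnmE !mnmDE !mulmnE !mnm1E -!val_eqE /= !inordK //.
by case: i => [[|[|[|[|[|[|//]]]]]] ?]; rewrite /= ?mul1n ?mul0n ?add0n ?addn0.
Qed.

Unset Implicit Arguments.

Theorem lemma7p5 (R : realFieldType) (w : 'I_6 -> R) :
  (forall i j : 'I_6, (i < j)%N -> w i < w j) ->
  [/\ init_form w Apoly = 6%:R * (al 4 ^+ 2 * al 5 ^+ 2 * al 6 ^+ 2),
      init_form w Bpoly = 4%:R * (al 3 ^+ 2 * al 4 ^+ 2 * al 5 ^+ 4 * al 6 ^+ 4),
      init_form w Cpoly = 8%:R * (al 3 ^+ 2 * al 4 ^+ 4 * al 5 ^+ 6 * al 6 ^+ 6)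
    & init_form w Dpoly =
        al 2 ^+ 2 * al 3 ^+ 4 * al 4 ^+ 6 * al 5 ^+ 8 * al 6 ^+ 10].
Proof.
move=> w_incr.
have lead_single c := lead_term_Delta_prod w_incr (same_label c).
have lead_pair (cd : seq nat * seq nat) :=
  lead_term_Delta_prodM w_incr (same_label cd.1) (same_label cd.2).
split.
- rewrite /Apoly sum_blockpart_pairprod.
  rewrite (init_form_sum_dominant (m := [:: 0; 0; 0; 2; 2; 2]%N) (n := 5)
             w_incr lead_single); last by vm_compute.
  by rewrite mpolyX_al !expr0 !mul1r.
- rewrite /Bpoly sum_blockpart_pairprod.
  rewrite (init_form_sum_dominant (m := [:: 0; 0; 2; 2; 4; 4]%N) (n := 3)
             w_incr lead_single); last by vm_compute.
  by rewrite mpolyX_al !expr0 !mul1r.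
- rewrite Cpoly_labellings.
  rewrite (init_form_sum_dominant (m := [:: 0; 0; 2; 4; 6; 6]%N) (n := 7)
             w_incr lead_pair); last by vm_compute.
  by rewrite mpolyX_al !expr0 !mul1r.
- have -> : Dpoly = Delta_prod (fun _ _ => true) by [].
  rewrite (init_form_lead_term _ (lead_term_Delta_prod w_incr _)) // scale1r.
  have -> : Delta_prod_exp (fun _ _ => true) = [:: 0; 2; 4; 6; 8; 10]%N by [].
  by rewrite mpolyX_al expr0 mul1r.
Qed.
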